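(* $\mathrm{para}\text{-}\mathrm{LOGCFL}/\mathrm{poly}\cap\mathrm{PHSP}\subseteq\mathrm{para}\text{-}\mathrm{LOGDCFL}/\mathrm{poly}$ if and only if $\mathrm{LOGCFL}/\mathrm{poly}\subseteq\mathrm{LOGDCFL}/\mathrm{poly}$.
   Context: $\mathrm{FL}/\mathrm{poly}$: functions computable by a deterministic Turing machine with read-only input tape, read-only two-way advice tape holding $h(|x|)$ for an arbitrary advice function $h$ with $|h(n)|\le n^{O(1)}$, work tape and write-once output tape, in polynomial time with $O(\log|x|)$ work space. $\mathrm{LOGCFL}/\mathrm{poly}$ (resp. $\mathrm{LOGDCFL}/\mathrm{poly}$): languages $L$ with $x\in L\iff f(x)\in B$ for some $f\in\mathrm{FL}/\mathrm{poly}$ and some context-free (resp. deterministic context-free) $B$. A parameterized decision problem is a pair $(L,m)$ with $L\subseteq\Sigma^*$ and size parameter $m:\Sigma^*\to\mathbb{N}$. $(f,m)\in\mathrm{para}\text{-}\mathrm{FL}/\mathrm{poly}$ if $m$ is logarithmic-space computable ($x\mapsto1^{m(x)}$ computable in polynomial time with logarithmic work space) and there are an advised deterministic Turing machine $M$, an advice function $h$ and a polynomial $p$ with $|h(|x|)|\le p(m(x)|x|)$ such that $M$ on input $x$ with advice $h(|x|)$ outputs $f(x)$ within time $p(m(x)|x|)$ using space $O(\log(m(x)|x|))$. $\mathrm{para}\text{-}\mathrm{LOGCFL}/\mathrm{poly}$ (resp. $\mathrm{para}\text{-}\mathrm{LOGDCFL}/\mathrm{poly}$): the $(L,m)$ such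 that for some $f$ with $(f,m)\in\mathrm{para}\text{-}\mathrm{FL}/\mathrm{poly}$ and a context-free (resp. deterministic context-free) $A$, $L=\{x\mid f(x)\in A\}$. $\mathrm{PHSP}$ is the collection of parameterized decision problems $(L,m)$ whose size parameter $m$ is polynomially honest: $|x|\le p(m(x))$ for some polynomial $p$ and all $x$. *)

From mathcomp Require Import all_boot.
Set Implicit Arguments. Unset Strict Implicit. Unset Printing Implicit Defensive.

(* Every polynomial is bounded by some c*n^k+c and conversely, so for  *)
(* upper bounds "some polynomial p" is equivalent to "some c, k".     *)
Definition pbound (c k n : nat) : nat := c * n ^ k + c.

Definition logbound (c n : nat) : nat := c * trunc_log 2 n + c.

(* Deterministic Turing machines with read-only input tape, read-only  *)
(* two-way advice tape, one work tape and a write-once output tape.    *)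
Inductive move := MvL | MvS | MvR.

(* Σ : input alphabet, Γ : output alphabet, A : advice alphabet *)
Record TM (Σ Γ A : finType) := {
  tm_state : finType;
  tm_work  : finType;
  tm_blank : tm_work;
  tm_start : tm_state;
  tm_halt  : tm_state -> bool;
  (* state, input symbol (None = endmarker), advice symbol (None = endmarker),
     work symbol  |->  new state, input move, advice move, written work symbol,
     work move, symbol appended to the (write-once, right-moving) output tape *)
  tm_delta : tm_state -> option Σ -> option A -> tm_work ->
             tm_state * move * move * tm_work * move * option Γ
}.

Record tm_config (Σ Γ A : finType) (M : TM Σ Γ A) := TMConfig {
  cf_state : tm_state M;
  cf_ipos  : nat;                  (* 0 and |x|+1 are the endmarkers *)
  cf_apos  : nat;                  (* 0 and |a|+1 are the endmarkers *)
  cf_wpos  : nat;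
  cf_wtape : nat -> tm_work M;
  cf_out   : seq Γ
}.

Definition read_tape (T : Type) (s : seq T) (i : nat) : option T :=
  if i == 0 then None else onth s i.-1.

Definition move_ro (d : move) (i bound : nat) : nat :=
  match d with MvL => i.-1 | MvS => i | MvR => minn i.+1 bound end.

Definition move_w (d : move) (i : nat) : nat :=
  match d with MvL => i.-1 | MvS => i | MvR => i.+1 end.

Definition tm_step (Σ Γ A : finType) (M : TM Σ Γ A) (x : seq Σ) (a : seq A)
    (c : tm_config M) : tm_config M :=
  if tm_halt (cf_state c) then c else
  let '(q, di, da, wsym, dw, o) :=
      tm_delta (cf_state c) (read_tape x (cf_ipos c)) (read_tape a (cf_apos c))
               (cf_wtape c (cf_wpos c)) in
  TMConfig q (move_ro di (cf_ipos c) (size x).+1)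
             (move_ro da (cf_apos c) (size a).+1)
             (move_w dw (cf_wpos c))
             (fun j => if j == cf_wpos c then wsym else cf_wtape c j)
             (cf_out c ++ (if o is Some g then [:: g] else [::])).

Definition tm_init (Σ Γ A : finType) (M : TM Σ Γ A) : tm_config M :=
  TMConfig (tm_start M) 0 0 0 (fun _ => tm_blank M) [::].

Definition tm_run (Σ Γ A : finType) (M : TM Σ Γ A) (x : seq Σ) (a : seq A)
    (t : nat) : tm_config M :=
  iter t (tm_step x a) (tm_init M).

Definition computes_within (Σ Γ A : finType) (M : TM Σ Γ A) (x : seq Σ)
    (a : seq A) (y : seq Γ) (T S : nat) : Prop :=
  exists t, [/\ t <= T,
    tm_halt (cf_state (tm_run M x a t)),
    cf_out (tm_run M x a t) = y &
    forall t', t' <= t -> cf_wpos (tm_run M x a t') < S].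

Definition FL_poly (Σ Γ : finType) (f : seq Σ -> seq Γ) : Prop :=
  exists (A : finType) (M : TM Σ Γ A) (h : nat -> seq A) (c k : nat),
    (forall n, size (h n) <= pbound c k n) /\
    forall x, computes_within M x (h (size x)) (f x)
                (pbound c k (size x)) (logbound c (size x)).

Definition logspace_computable (Σ : finType) (m : seq Σ -> nat) : Prop :=
  exists (M : TM Σ unit bool) (c k : nat),
    forall x, computes_within M x [::] (nseq (m x) tt)
                (pbound c k (size x)) (logbound c (size x)).

Definition para_FL_poly (Σ Γ : finType) (f : seq Σ -> seq Γ)
    (m : seq Σ -> nat) : Prop :=
  logspace_computable m /\
  exists (A : finType) (M : TM Σ Γ A) (h : nat -> seq A) (c k : nat),
    (forall x, size (h (size x)) <= pbound c k (m x * size x)) /\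
    forall x, computes_within M x (h (size x)) (f x)
                (pbound c k (m x * size x)) (logbound c (m x * size x)).

Record CFG (Γ : finType) := {
  cfg_nt    : finType;
  cfg_start : cfg_nt;
  cfg_rules : seq (cfg_nt * seq (cfg_nt + Γ))
}.

Inductive derives (Γ : finType) (G : CFG Γ) : cfg_nt G -> seq Γ -> Prop :=
| der_rule (X : cfg_nt G) rhs w :
    (X, rhs) \in cfg_rules G -> derives_seq rhs w -> derives X w
with derives_seq (Γ : finType) (G : CFG Γ) : seq (cfg_nt G + Γ) -> seq Γ -> Prop :=
| ds_nil : derives_seq [::] [::]
| ds_term (a : Γ) rhs w :
    derives_seq rhs w -> derives_seq (inr a :: rhs) (a :: w)
| ds_nt (X : cfg_nt G) rhs u w :
    derives X u -> derives_seq rhs w -> derives_seq (inl X :: rhs) (u ++ w).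

Arguments derives {Γ} G _ _.
Arguments derives_seq {Γ} G _ _.

Definition context_free (Γ : finType) (B : seq Γ -> Prop) : Prop :=
  exists G : CFG Γ, forall w, B w <-> derives G (cfg_start G) w.

Record DPDA (Γ : finType) := {
  pda_state  : finType;
  pda_stack  : finType;
  pda_start  : pda_state;
  pda_bottom : pda_stack;
  pda_final  : pda_state -> bool;
  pda_delta  : pda_state -> option Γ -> pda_stack ->
               option (pda_state * seq pda_stack);
  pda_det    : forall q z, pda_delta q None z != None ->
               forall a, pda_delta q (Some a) z = None
}.

Definition pda_config (Γ : finType) (P : DPDA Γ) : Type :=
  (pda_state P * seq Γ * seq (pda_stack P))%type.

Inductive pda_step (Γ : finType) (P : DPDA Γ) :
    pda_config P -> pda_config P -> Prop :=
| ps_eps q w z s p g :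
    pda_delta q None z = Some (p, g) ->
    pda_step (q, w, z :: s) (p, w, g ++ s)
| ps_read q a w z s p g :
    pda_delta q (Some a) z = Some (p, g) ->
    pda_step (q, a :: w, z :: s) (p, w, g ++ s).

Inductive pda_reach (Γ : finType) (P : DPDA Γ) :
    pda_config P -> pda_config P -> Prop :=
| pr_refl c : pda_reach c c
| pr_step c1 c2 c3 : pda_step c1 c2 -> pda_reach c2 c3 -> pda_reach c1 c3.

Arguments pda_step {Γ} P _ _.
Arguments pda_reach {Γ} P _ _.

Definition dpda_accepts (Γ : finType) (P : DPDA Γ) (w : seq Γ) : Prop :=
  exists p s, pda_reach P (pda_start P, w, [:: pda_bottom P]) (p, [::], s)
              /\ pda_final p.

Definition det_context_free (Γ : finType) (B : seq Γ -> Prop) : Prop :=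
  exists P : DPDA Γ, forall w, B w <-> dpda_accepts P w.

Definition LOGCFL_poly (Σ : finType) (L : seq Σ -> Prop) : Prop :=
  exists (Γ : finType) (f : seq Σ -> seq Γ) (B : seq Γ -> Prop),
    FL_poly f /\ context_free B /\ forall x, L x <-> B (f x).

Definition LOGDCFL_poly (Σ : finType) (L : seq Σ -> Prop) : Prop :=
  exists (Γ : finType) (f : seq Σ -> seq Γ) (B : seq Γ -> Prop),
    FL_poly f /\ det_context_free B /\ forall x, L x <-> B (f x).

Definition para_LOGCFL_poly (Σ : finType) (L : seq Σ -> Prop)
    (m : seq Σ -> nat) : Prop :=
  exists (Γ : finType) (f : seq Σ -> seq Γ) (B : seq Γ -> Prop),
    para_FL_poly f m /\ context_free B /\ forall x, L x <-> B (f x).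

Definition para_LOGDCFL_poly (Σ : finType) (L : seq Σ -> Prop)
    (m : seq Σ -> nat) : Prop :=
  exists (Γ : finType) (f : seq Σ -> seq Γ) (B : seq Γ -> Prop),
    para_FL_poly f m /\ det_context_free B /\ forall x, L x <-> B (f x).

Definition PHSP (Σ : finType) (L : seq Σ -> Prop) (m : seq Σ -> nat) : Prop :=
  exists c k, forall x, size x <= pbound c k (m x).

From mathcomp Require Import all_boot zify.

(* A logspace-computable size parameter m satisfies m(x) <= poly(|x|), since
   the machine writes 1^(m x) within polynomial time; if m is also
   polynomially honest, then |x| <= poly(m(x) |x|) as well.  So m(x)|x| and
   |x| are polynomially equivalent, which makes para-FL/poly with parameter m
   coincide with FL/poly, and each para-class restricted to PHSP collapses to
   its unparameterised version.  Conversely, every language becomes a PHSP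
   problem with the logspace-computable parameter m(x) = |x|. *)

Set Implicit Arguments. Unset Strict Implicit. Unset Printing Implicit Defensive.

Definition shifted_pow (c k n : nat) : nat := c * n.+1 ^ k.

Lemma leq_exp2rW m n e : m <= n -> m ^ e <= n ^ e.
Proof. by case: e => [|e] // le_mn; rewrite leq_exp2r. Qed.

Lemma leq_pbound c C k n N : c <= C -> n <= N -> pbound c k n <= pbound C k N.
Proof. by move=> le_cC le_nN; rewrite leq_add ?leq_mul ?leq_exp2rW. Qed.

Lemma leq_logbound c C n N : c <= C -> n <= N -> logbound c n <= logbound C N.
Proof. by move=> le_cC le_nN; rewrite leq_add ?leq_mul ?leq_trunc_log. Qed.

Lemma leq_shifted_pow c k n N :
  n <= N -> shifted_pow c k n <= shifted_pow c k N.
Proof. by move=> le_nN; rewrite leq_mul2l leq_exp2rW ?orbT. Qed.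

Lemma pbound_le_shifted_pow c k n : pbound c k n <= shifted_pow (2 * c) k n.
Proof.
have le_pow : n ^ k <= n.+1 ^ k by apply: leq_exp2rW.
have pow_gt0 : 0 < n.+1 ^ k by rewrite expn_gt0.
rewrite /pbound /shifted_pow; nia.
Qed.

Lemma shifted_pow_le_pbound c k n : shifted_pow c k n <= pbound (c * 2 ^ k) k n.
Proof.
(* (n + 1)^k <= (2n)^k for n > 0, and 1 <= 2^k for n = 0 *)
have le_pow : n.+1 ^ k <= 2 ^ k * n ^ k + 2 ^ k.
  case: n => [|n].
    by rewrite exp1n (leq_trans _ (leq_addl _ _)) ?expn_gt0.
  by rewrite -expnMn (leq_trans _ (leq_addr _ _)) // leq_exp2rW //; lia.
rewrite /shifted_pow /pbound; move: le_pow; move: (n.+1 ^ k) (2 ^ k) (n ^ k).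
nia.
Qed.

Lemma shifted_pow_comp c k a b n :
  shifted_pow c k (shifted_pow a b n) <= shifted_pow (c * a.+1 ^ k) (b * k) n.
Proof.
rewrite /shifted_pow -mulnA leq_mul2l expnM -expnMn leq_exp2rW ?orbT //.
have : 0 < n.+1 ^ b by rewrite expn_gt0.
move: (n.+1 ^ b) => p; nia.
Qed.

Lemma pbound_comp c k a b : exists C K, forall n N,
  N <= pbound a b n -> pbound c k N <= pbound C K n.
Proof.
exists (2 * c * (2 * a).+1 ^ k * 2 ^ (b * k)), (b * k) => n N le_N.
apply: leq_trans (pbound_le_shifted_pow c k N) _.
have le_N' := leq_trans le_N (pbound_le_shifted_pow a b n).
apply: leq_trans (leq_shifted_pow _ _ le_N') _.
exact: leq_trans (shifted_pow_comp _ _ _ _ _) (shifted_pow_le_pbound _ _ _).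
Qed.

Lemma logbound_comp c a b : exists C, forall n N,
  N <= pbound a b n -> logbound c N <= logbound C n.
Proof.
exists (c * (2 * a + b).+1) => n N le_N.
rewrite /logbound; set l := trunc_log 2 n.
(* N <= 2a (n + 1)^b <= 2^(2a + b (l + 1)) *)
have le_N_pow : N <= 2 ^ (2 * a + b * l.+1).
  apply: leq_trans le_N (leq_trans (pbound_le_shifted_pow a b n) _).
  rewrite /shifted_pow expnD [b * _]mulnC [2 ^ (_ * b)]expnM.
  apply: leq_mul; first exact/ltnW/ltn_expl.
  exact/leq_exp2rW/trunc_log_ltn.
have le_log : trunc_log 2 N <= 2 * a + b * l.+1.
  by rewrite -[X in _ <= X](@trunc_expnK 2) // leq_trunc_log.
rewrite -!mulnSr -mulnA leq_mul2l; apply/orP; right.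
move: le_log; nia.
Qed.

Lemma pbound_mul a b c d : exists C K, forall n,
  pbound a b n * pbound c d n <= pbound C K n.
Proof.
exists (2 * a * (2 * c) * 2 ^ (b + d)), (b + d) => n.
apply: leq_trans (leq_mul (pbound_le_shifted_pow a b n)
                          (pbound_le_shifted_pow c d n)) _.
by rewrite /shifted_pow mulnACA -expnD shifted_pow_le_pbound.
Qed.

Definition poly_bounded (T : Type) (g f : T -> nat) : Prop :=
  exists c k, forall x, g x <= pbound c k (f x).

Lemma poly_bounded_leq_add (T : Type) (g f : T -> nat) c :
  (forall x, g x <= c + f x) -> poly_bounded g f.
Proof.
by move=> le_gf; exists c.+1, 1 => x; have := le_gf x; rewrite /pbound; lia.
Qed.

Lemma poly_bounded_mul (T : Type) (g1 g2 f : T -> nat) :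
  poly_bounded g1 f -> poly_bounded g2 f ->
  poly_bounded (fun x => g1 x * g2 x) f.
Proof.
move=> [a [b le_g1]] [c [d le_g2]]; have [C [K le_mul]] := pbound_mul a b c d.
by exists C, K => x; exact: leq_trans (leq_mul (le_g1 x) (le_g2 x)) (le_mul _).
Qed.

Section TuringMachines.

Variables (Σ Γ A : finType) (M : TM Σ Γ A).

Lemma size_out_run x a t : size (cf_out (tm_run M x a t)) <= t.
Proof.
elim: t => [|t IH] //; rewrite /tm_run iterS -/(tm_run M x a t) /tm_step.
case: (tm_halt _); first exact: leq_trans IH _.
case: (tm_delta _ _ _ _) => [[[[[q di] da] w] dw] o] /=.
by rewrite size_cat; case: o => [g|] /=; lia.
Qed.

Lemma computes_within_mono x a y T S T' S' :
  T <= T' -> S <= S' ->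
  computes_within M x a y T S -> computes_within M x a y T' S'.
Proof.
move=> le_T le_S [t [le_t halt out space]]; exists t; split => //.
  exact: leq_trans le_T.
by move=> t' /space /leq_trans; apply.
Qed.

End TuringMachines.

Lemma logspace_computable_poly_bounded (Σ : finType) (m : seq Σ -> nat) :
  logspace_computable m -> poly_bounded m size.
Proof.
move=> [M [c [k run]]]; exists c, k => x; have [t [le_t _ out _]] := run x.
by have := size_out_run M x [::] t; rewrite out size_nseq => /leq_trans; apply.
Qed.

Section UnarySize.

Variable Σ : finType.

(* States: [None] on the left endmarker, [Some false] while scanning,
   [Some true] halted after reaching the right endmarker. *)
Definition unary_size_delta (q : option bool) (i : option Σ) (_ : option bool)
    (_ : unit) : option bool * move * move * unit * move * option unit :=
  match q, i with
  | None, _ => (Some false, MvR, MvS, tt, MvS, None)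
  | Some false, Some _ => (Some false, MvR, MvS, tt, MvS, Some tt)
  | _, _ => (Some true, MvS, MvS, tt, MvS, None)
  end.

Definition unary_size_TM : TM Σ unit bool :=
  {| tm_state := option bool; tm_work := unit; tm_blank := tt;
     tm_start := None; tm_halt := fun q => q == Some true;
     tm_delta := unary_size_delta |}.

Lemma unary_size_wpos x t : cf_wpos (tm_run unary_size_TM x [::] t) = 0.
Proof.
elim: t => [|t IH] //; rewrite /tm_run iterS -/(tm_run unary_size_TM x [::] t).
rewrite /tm_step; case: (tm_halt _) => //=.
by case: (cf_state _) (read_tape _ _) => [[]|] [?|] /=.
Qed.

Lemma unary_size_scan x j : j <= size x ->
  [/\ cf_state (tm_run unary_size_TM x [::] j.+1) = Some false,
      cf_ipos (tm_run unary_size_TM x [::] j.+1) = j.+1 &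
      cf_out (tm_run unary_size_TM x [::] j.+1) = nseq j tt].
Proof.
elim: j => [|j IH] le_j.
  by rewrite /tm_run /= /tm_step /=; split => //; lia.
have [state ipos out] := IH (ltnW le_j).
rewrite /tm_run iterS -/(tm_run unary_size_TM x [::] j.+1).
rewrite /tm_step state /= ipos /read_tape /=.
case E: (onth x j) => [s|]; last by move: (onthTE x j); rewrite E le_j.
rewrite /= out -[[:: tt]]/(nseq 1 tt) -nseqD addn1; split => //.
exact/minn_idPl.
Qed.

Lemma unary_size_halts x :
  tm_halt (cf_state (tm_run unary_size_TM x [::] (size x).+2)) /\
  cf_out (tm_run unary_size_TM x [::] (size x).+2) = nseq (size x) tt.
Proof.
have [state ipos out] := @unary_size_scan x _ (leqnn (size x)).
rewrite /tm_run iterS -/(tm_run unary_size_TM x [::] (size x).+1).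
by rewrite /tm_step state /= ipos /read_tape /= onth_default //= out cats0.
Qed.

Lemma logspace_computable_size : logspace_computable (fun x : seq Σ => size x).
Proof.
exists unary_size_TM, 2, 1 => x; have [halt out] := unary_size_halts x.
exists (size x).+2; split => //; first by rewrite /pbound; lia.
by move=> t' _; rewrite unary_size_wpos /logbound; lia.
Qed.

End UnarySize.

Definition FL_poly_wrt (Σ Γ : finType) (f : seq Σ -> seq Γ)
    (N : seq Σ -> nat) : Prop :=
  exists (A : finType) (M : TM Σ Γ A) (h : nat -> seq A) (c k : nat),
    (forall x, size (h (size x)) <= pbound c k (N x)) /\
    forall x, computes_within M x (h (size x)) (f x)
                (pbound c k (N x)) (logbound c (N x)).

Section FLPolyWrt.

Variables (Σ Γ : finType) (f : seq Σ -> seq Γ).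

Lemma FL_poly_wrt_poly_bounded (N N' : seq Σ -> nat) :
  poly_bounded N N' -> FL_poly_wrt f N -> FL_poly_wrt f N'.
Proof.
move=> [a [b le_N]] [A [M [h [c [k [advice run]]]]]].
have [C [K time]] := pbound_comp c k a b; have [D space] := logbound_comp c a b.
exists A, M, h, (maxn C D), K; split => [x|x].
  rewrite (leq_trans (advice x)) // (leq_trans (time _ _ (le_N x))) //.
  by rewrite leq_pbound ?leq_maxl.
apply: computes_within_mono (run x).
  by rewrite (leq_trans (time _ _ (le_N x))) ?leq_pbound ?leq_maxl.
by rewrite (leq_trans (space _ _ (le_N x))) ?leq_logbound ?leq_maxr.
Qed.

Lemma FL_poly_wrt_size : FL_poly_wrt f size <-> FL_poly f.
Proof.
split=> [[A [M [h [c [k [advice run]]]]]] | [A [M [h [c [k [advice run]]]]]]].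
(* only the lengths of actual inputs are constrained (there are none but 0
   over an empty alphabet), so oversized advice elsewhere is discarded *)
- exists A, M, (fun n => if size (h n) <= pbound c k n then h n else [::]).
  exists c, k.
  by split=> [n|x]; [case: ifP | rewrite advice].
- by exists A, M, h, c, k.
Qed.

Lemma para_FL_polyE (m : seq Σ -> nat) : logspace_computable m ->
  poly_bounded size m -> para_FL_poly f m <-> FL_poly f.
Proof.
move=> lc_m [c [k honest]]; rewrite -FL_poly_wrt_size.
have le_size x : size x <= pbound c k 0 + m x * size x.
  case: (posnP (m x)) (honest x) => [-> | m_gt0] le_x; first by rewrite addn0.
  by rewrite (leq_trans (leq_pmull _ m_gt0)) ?leq_addl.
split=> [[_ Hf] | Hf]; last split=> //.
  apply: FL_poly_wrt_poly_bounded Hf.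
  by apply: poly_bounded_mul (logspace_computable_poly_bounded lc_m) _;
     apply: (@poly_bounded_leq_add _ _ _ 0).
exact: FL_poly_wrt_poly_bounded (poly_bounded_leq_add le_size) Hf.
Qed.

End FLPolyWrt.

Definition reducible_via (Σ : finType)
    (F : forall Γ : finType, (seq Σ -> seq Γ) -> Prop)
    (K : forall Γ : finType, (seq Γ -> Prop) -> Prop)
    (L : seq Σ -> Prop) : Prop :=
  exists (Γ : finType) (f : seq Σ -> seq Γ) (B : seq Γ -> Prop),
    F Γ f /\ K Γ B /\ forall x, L x <-> B (f x).

Lemma reducible_via_equiv (Σ : finType) F F' K (L : seq Σ -> Prop) :
  (forall Γ f, F Γ f <-> F' Γ f) ->
  reducible_via F K L <-> reducible_via F' K L.
Proof.
by move=> FF'; split=> [[Γ [f [B [Ff rest]]]] | [Γ [f [B [Ff rest]]]]];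
  exists Γ, f, B; rewrite FF' in Ff *.
Qed.

Section HonestParameter.

Variables (Σ : finType) (L : seq Σ -> Prop) (m : seq Σ -> nat).
Hypotheses (lc_m : logspace_computable m) (honest_m : PHSP L m).

Lemma para_LOGCFL_polyE : para_LOGCFL_poly L m <-> LOGCFL_poly L.
Proof.
apply: (@reducible_via_equiv _ (fun Γ f => para_FL_poly f m)
                             (fun Γ f => FL_poly f)).
by move=> Γ f; apply: para_FL_polyE.
Qed.

Lemma para_LOGDCFL_polyE : para_LOGDCFL_poly L m <-> LOGDCFL_poly L.
Proof.
apply: (@reducible_via_equiv _ (fun Γ f => para_FL_poly f m)
                             (fun Γ f => FL_poly f)).
by move=> Γ f; apply: para_FL_polyE.
Qed.

End HonestParameter.

Lemma para_LOGCFL_poly_logspace_computable (Σ : finType)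
    (L : seq Σ -> Prop) (m : seq Σ -> nat) :
  para_LOGCFL_poly L m -> logspace_computable m.
Proof. by move=> [Γ [f [B [[lc_m _] _]]]]. Qed.

Lemma PHSP_size (Σ : finType) (L : seq Σ -> Prop) : PHSP L (fun x => size x).
Proof. exact: (@poly_bounded_leq_add _ _ _ 0). Qed.

Theorem proposition3p3 :
  (forall (Σ : finType) (L : seq Σ -> Prop) (m : seq Σ -> nat),
      para_LOGCFL_poly L m -> PHSP L m -> para_LOGDCFL_poly L m)
  <->
  (forall (Σ : finType) (L : seq Σ -> Prop),
      LOGCFL_poly L -> LOGDCFL_poly L).
Proof.
split=> [para_incl Σ L cfl | incl Σ L m pcfl honest].
- have lc_size := logspace_computable_size Σ.
  rewrite -(para_LOGDCFL_polyE lc_size (PHSP_size L)).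
  apply: para_incl (PHSP_size L).
  by rewrite (para_LOGCFL_polyE lc_size (PHSP_size L)).
- have lc_m := para_LOGCFL_poly_logspace_computable pcfl.
  rewrite (para_LOGDCFL_polyE lc_m honest); apply: incl.
  by rewrite -(para_LOGCFL_polyE lc_m honest).
Qed.
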